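(* Let $H$ be an $r$-graph. Then $\mathrm{sd}\,\mathsf{B}_{\mathrm{edge}}(H)$ $S_r$-collapses onto its $S_r$-subcomplex $\Delta(i(P_{K_r^r,H}))$.
   Context: An $r$-graph $H$ consists of a vertex set $V(H)$ and a set $E(H)$ of $r$-element subsets of $V(H)$; an edge $\{v_1,\dots,v_r\}$ is written $v_1\cdots v_r$. $P_{K_r^r,H}$ is the poset of maps $f:\{1,\dots,r\}\to 2^{V(H)}\setminus\{\varnothing\}$ such that for every choice $x_j\in f(j)$ the $x_j$ are distinct and $x_1\cdots x_r\in E(H)$, ordered by $f\le g$ iff $f(j)\subseteq g(j)$ for all $j$; $S_r$ acts on it on the right by $f\sigma=f\circ\sigma$. $\mathsf{B}_{\mathrm{edge}}(H)$ is the simplicial complex whose vertices are tuples $(v_1,\dots,v_r)\in V(H)^r$ with $v_1\cdots v_r\in E(H)$ and whose simplices are the sets $F$ of such tuples with $\mathrm{pr}_1(F),\dots,\mathrm{pr}_r(F)$ pairwise disjoint and $x_1\cdots x_r\in E(H)$ for every choice $x_j\in\mathrm{pr}_j(F)$; $S_r$ acts on the right by $(v_1,\dots,v_r)\sigma=(v_{\sigma(1)},\dots,v_{\sigma(r)})$. $\mathcal F(\mathsf{B}_{\mathrm{edge}}(H))$ is its poset of nonempty simplices, $\Delta(P)$ denotes the order complex of a poset $P$ (simplices = chains), and $\mathrm{sd}\,\mathsf{B}_{\mathrm{edge}}(H)=\Delta(\mathcal F(\mathsf{B}_{\mathrm{edge}}(H)))$ with the induced $S_r$-action. The $S_r$-equivariant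 injective poset map $i:P_{K_r^r,H}\to\mathcal F(\mathsf{B}_{\mathrm{edge}}(H))$ is $i(\varphi)=\varphi(1)\times\cdots\times\varphi(r)$, so $\Delta(i(P_{K_r^r,H}))$ is an $S_r$-subcomplex of $\mathrm{sd}\,\mathsf{B}_{\mathrm{edge}}(H)$. For a simplicial $G$-complex $\mathsf K$: a facet is a maximal simplex; a simplex $\sigma$ is free if it is a proper face of exactly one facet $\varphi_\sigma$; a collection of free simplices is independently free if no two distinct members have a common coface. For free $\sigma$ with $\dim\varphi_\sigma=\dim\sigma+1$ and $\sigma G$ independently free, an elementary $G$-collapse replaces $\mathsf K$ by the subcomplex of simplices having no $\sigma g$ ($g\in G$) as a face. $\mathsf K$ $G$-collapses onto a $G$-subcomplex $\mathsf K'$ if a finite sequence of elementary $G$-collapses leads from $\mathsf K$ to $\mathsf K'$. *)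

From mathcomp Require Import all_boot fingroup perm.
Set Implicit Arguments. Unset Strict Implicit. Unset Printing Implicit Defensive.

(* ---------- Generic notions for simplicial G-complexes ----------
   A (finite) simplicial complex with vertex set in a finType X is
   represented by its set of nonempty simplices K : {set {set X}}. *)

Definition is_facet (X : finType) (K : {set {set X}}) (s : {set X}) : bool :=
  (s \in K) && [forall t in K, (s \subset t) ==> (t == s)].

Definition facets_over (X : finType) (K : {set {set X}}) (s : {set X}) :=
  [set p in K | is_facet K p && (s \proper p)].

Definition is_free (X : finType) (K : {set {set X}}) (s : {set X}) : bool :=
  (s \in K) && (#|facets_over K s| == 1).

Definition common_coface (X : finType) (K : {set {set X}}) (s1 s2 : {set X}) :=
  [exists t in K, (s1 \subset t) && (s2 \subset t)].

Definition indep_free (X : finType) (K : {set {set X}}) (C : {set {set X}}) :=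
  [forall s in C, is_free K s] &&
  [forall s1 in C, forall s2 in C, (s1 != s2) ==> ~~ common_coface K s1 s2].

Definition sact (X : finType) (G : finGroupType) (act : X -> G -> X)
  (s : {set X}) (g : G) : {set X} := [set act x g | x in s].

Definition simplex_orbit (X : finType) (G : finGroupType) (act : X -> G -> X)
  (s : {set X}) : {set {set X}} := [set sact act s g | g : G].

Definition elem_G_collapse (X : finType) (G : finGroupType) (act : X -> G -> X)
  (K : {set {set X}}) (s : {set X}) (K' : {set {set X}}) : Prop :=
  [/\ is_free K s,
      (exists p, facets_over K s = [set p] /\ #|p| = #|s|.+1),
      indep_free K (simplex_orbit act s) &
      K' = [set t in K | [forall g : G, ~~ (sact act s g \subset t)]]].

Inductive G_collapses (X : finType) (G : finGroupType) (act : X -> G -> X)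
  (K : {set {set X}}) : {set {set X}} -> Prop :=
| GC_refl : G_collapses act K K
| GC_step : forall K1 s K2, G_collapses act K K1 ->
    elem_G_collapse act K1 s K2 -> G_collapses act K K2.

Definition order_complex (Y : finType) (A : {set {set Y}}) : {set {set {set Y}}} :=
  [set c : {set {set Y}} | (c != set0) && (c \subset A) &&
     [forall a in c, forall b in c, (a \subset b) || (b \subset a)]].

Section Rgraph.
Variables (V : finType) (r : nat) (E : {set {set V}}).

Definition rtuple := {ffun 'I_r -> V}.

Definition is_edge_tuple (x : rtuple) : bool :=
  injectiveb x && ([set x j | j in 'I_r] \in E).

Definition proj (j : 'I_r) (F : {set rtuple}) : {set V} := [set (t : rtuple) j | t in F].

Definition Bedge_face (F : {set rtuple}) : bool :=
  [&& F != set0,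
      [forall t in F, is_edge_tuple t],
      [forall j : 'I_r, forall k : 'I_r, (j != k) ==> [disjoint proj j F & proj k F]] &
      [forall x : rtuple, [forall j, x j \in proj j F] ==> is_edge_tuple x]].

Definition Bedge_faces : {set {set rtuple}} := [set F | Bedge_face F].

Definition sd_Bedge := order_complex Bedge_faces.

Definition in_P (f : {ffun 'I_r -> {set V}}) : bool :=
  [forall j, f j != set0] &&
  [forall x : rtuple, [forall j, x j \in f j] ==> is_edge_tuple x].

Definition iP (f : {ffun 'I_r -> {set V}}) : {set rtuple} :=
  [set t : rtuple | [forall j, t j \in f j]].

Definition Delta_iP := order_complex [set iP f | f in [set f | in_P f]].

Definition tuple_act (t : rtuple) (g : {perm 'I_r}) : rtuple := [ffun j => t (g j)].
Definition face_act (F : {set rtuple}) (g : {perm 'I_r}) : {set rtuple} :=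
  [set tuple_act (t : rtuple) g | t in F].

End Rgraph.

(* The map F |-> pr_1(F) x ... x pr_r(F) is an S_r-equivariant closure
   operator on the face poset of B_edge(H), and its closed faces are exactly
   the image of i.  For any equivariant closure operator c on a poset A, the
   order complex of A collapses equivariantly onto the order complex of the
   closed elements: a chain s with a non-closed element, whose largest
   non-closed element is x, is matched with s + {c x}, since c x is comparable
   with every element of s.  Removing the matched pairs orbit by orbit in
   decreasing order of (|x|, |s|), each removal is an elementary G-collapse:
   once the larger pairs are gone, s is a free face of the single facet
   s + {c x}, and distinct chains of one orbit have no common coface. *)

From mathcomp Require Import all_boot fingroup perm zify.
Set Implicit Arguments. Unset Strict Implicit. Unset Printing Implicit Defensive.

Lemma G_collapses_trans (X : finType) (G : finGroupType) (act : X -> G -> X) K1 K2 K3 :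
  G_collapses act K1 K2 -> G_collapses act K2 K3 -> G_collapses act K1 K3.
Proof. by move=> K12; elim=> // Ka s Kb _ K1a sKab; apply: GC_step K1a sKab. Qed.

Section SimplexAction.
Local Open Scope group_scope.
Variables (X : finType) (G : finGroupType) (act : X -> G -> X).
Hypothesis act1 : forall x, act x 1 = x.
Hypothesis actM : forall x g h, act (act x g) h = act x (h * g).

Lemma act_inj g : injective (act^~ g).
Proof. by apply: (can_inj (g := act^~ g^-1)) => x /=; rewrite actM mulVg act1. Qed.

Lemma sact1 (s : {set X}) : sact act s 1 = s.
Proof. by rewrite /sact (eq_imset _ act1) imset_id. Qed.

Lemma sactM (s : {set X}) g h : sact act (sact act s g) h = sact act s (h * g).
Proof. by rewrite /sact -imset_comp; apply: eq_imset => x /=; rewrite actM. Qed.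

Lemma sactK g (s : {set X}) : sact act (sact act s g) g^-1 = s.
Proof. by rewrite sactM mulVg sact1. Qed.

Lemma sactS (s t : {set X}) g : s \subset t -> sact act s g \subset sact act t g.
Proof. exact: imsetS. Qed.

Lemma sact_subset (s t : {set X}) g :
  (sact act s g \subset sact act t g) = (s \subset t).
Proof. by apply/idP/idP => [/(sactS g^-1)|/sactS//]; rewrite !sactK. Qed.

Lemma card_sact (s : {set X}) g : #|sact act s g| = #|s|.
Proof. exact: card_imset (@act_inj g). Qed.

Lemma mem_sact x (s : {set X}) g : (act x g \in sact act s g) = (x \in s).
Proof. exact: mem_imset (@act_inj g). Qed.

End SimplexAction.

Definition avoid (X : finType) (K S : {set {set X}}) :=
  [set t in K | [forall s in S, ~~ (s \subset t)]].

Definition del_orbit (X : finType) (G : finGroupType) (act : X -> G -> X)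
  (K : {set {set X}}) (s : {set X}) :=
  [set t in K | [forall g : G, ~~ (sact act s g \subset t)]].

Section MatchingCollapse.
Local Open Scope group_scope.
Variables (X : finType) (G : finGroupType) (act : X -> G -> X).
Hypothesis act1 : forall x, act x 1 = x.
Hypothesis actM : forall x g h, act (act x g) h = act x (h * g).
Variables (key : {set X} -> nat) (pivot : {set X} -> X).

(* Each [s] in [S] is paired with its coface [pivot s |: s]. *)
Record acyclic_G_matching (K S : {set {set X}}) : Prop := AcyclicGMatching {
  matching_K_act : forall t g, t \in K -> sact act t g \in K;
  matching_S_act : forall s g, s \in S -> sact act s g \in S;
  matching_key_act : forall s g, s \in S -> key (sact act s g) = key s;
  matching_pivot_notin : forall s, s \in S -> pivot s \notin s;
  matching_S_sub : {subset S <= K};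
  matching_coface_in : forall s, s \in S -> pivot s |: s \in K;
  matching_key_coface : forall s s', s \in S -> s' \in S ->
    s' \subset pivot s |: s -> s' = s \/ key s' < key s;
  matching_cofaces : forall s t, s \in S -> t \in K -> s \subset t ->
    [\/ t = s, t = pivot s |: s |
        exists2 s', s' \in S & (key s < key s') && (s' \subset t)]
}.

Section TopOrbit.
Variables (K S : {set {set X}}) (s0 : {set X}).
Hypotheses (M : acyclic_G_matching K S) (s0S : s0 \in S).
Hypothesis s0_max : forall s, s \in S -> key s <= key s0.
Local Notation O := (simplex_orbit act s0).

Lemma orbit_top s : s \in O -> s \in S /\ key s = key s0.
Proof.
by case/imsetP => g _ ->; rewrite (matching_S_act M) ?(matching_key_act M).
Qed.

Lemma top_cofaces s t : s \in S -> key s = key s0 -> t \in K -> s \subset t ->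
  t = s \/ t = pivot s |: s.
Proof.
move=> sS ks tK st.
case: (matching_cofaces M sS tK st) => [->|->|[s' s'S /andP[lt _]]].
- by left.
- by right.
by move: (s0_max s'S); rewrite -ks leqNgt lt.
Qed.

Lemma top_facets_over s : s \in S -> key s = key s0 ->
  facets_over K s = [set pivot s |: s].
Proof.
move=> sS ks.
have ncoface : ~~ (pivot s |: s \subset s).
  by apply: contra (matching_pivot_notin M sS) => /subsetP; apply; rewrite setU11.
apply/setP => p; rewrite !inE; apply/idP/eqP => [/and3P[pK _ sp] | ->].
  case: (top_cofaces sS ks pK (proper_sub sp)) => // ps.
  by rewrite ps properxx in sp.
rewrite (matching_coface_in M sS) properE subsetUr ncoface /is_facet.
rewrite (matching_coface_in M sS) /= andbT.
apply/forall_inP => t tK; apply/implyP => pt.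
have st := subset_trans (subsetUr _ _) pt.
by move: pt; case: (top_cofaces sS ks tK st) => -> //; rewrite (negbTE ncoface).
Qed.

Lemma top_is_free s : s \in S -> key s = key s0 -> is_free K s.
Proof.
by move=> sS ks; rewrite /is_free (matching_S_sub M sS) top_facets_over ?cards1.
Qed.

Lemma elem_collapse_top : elem_G_collapse act K s0 (del_orbit act K s0).
Proof.
split=> //; first exact: top_is_free.
  exists (pivot s0 |: s0); rewrite top_facets_over //.
  by rewrite cardsU1 (matching_pivot_notin M s0S).
apply/andP; split; first by apply/forall_inP => s /orbit_top[]; apply: top_is_free.
apply/forall_inP => a /orbit_top[aS ka]; apply/forall_inP => b /orbit_top[bS kb].
apply/implyP => nab; apply/negP => /exists_inP[t tK /andP[a_t b_t]].
have b_coface : b \subset pivot a |: a.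
  move: b_t; case: (top_cofaces aS ka tK a_t) => -> // /subset_trans; apply.
  exact: subsetUr.
case: (matching_key_coface M aS bS b_coface) => [ba|].
  by rewrite ba eqxx in nab.
by rewrite ka kb ltnn.
Qed.

Lemma orbit_notin_coface s g : s \in S -> s \notin O ->
  ~~ (sact act s0 g \subset pivot s |: s).
Proof.
move=> sS sO; apply/negP => sub.
have s0gS := matching_S_act M g s0S.
case: (matching_key_coface M sS s0gS sub) => [e|].
  by move: sO; rewrite -e; apply/negP/negPn/imsetP; exists g.
by rewrite (matching_key_act M g s0S) ltnNge s0_max.
Qed.

Lemma del_orbit_matching :
  acyclic_G_matching (del_orbit act K s0) (S :\: O).
Proof.
case: M => K_act S_act key_act pivot_notin S_sub coface_in key_coface cofaces.
split.
- move=> t g; rewrite !inE => /andP[tK /forallP nt]; rewrite K_act //=.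
  apply/forallP => h; apply/negP => sub.
  by have := sactS act g^-1 sub; rewrite (sactK act1 actM) (sactM actM); apply/negP.
- move=> s g /setDP[sS sO]; rewrite inE S_act // andbT.
  apply: contra sO => /imsetP[h _ e]; apply/imsetP; exists (g^-1 * h) => //.
  by rewrite -(sactM actM) -e (sactK act1 actM).
- by move=> s g /setDP[sS _]; apply: key_act.
- by move=> s /setDP[sS _]; apply: pivot_notin.
- move=> s /setDP[sS sO]; rewrite inE S_sub //=; apply/forallP => g.
  apply: contra (orbit_notin_coface g sS sO) => /subset_trans; apply.
  exact: subsetUr.
- move=> s /setDP[sS sO]; rewrite inE coface_in //=.
  by apply/forallP => g; apply: orbit_notin_coface.
- by move=> s s' /setDP[sS _] /setDP[s'S _]; apply: key_coface.
move=> s t /setDP[sS sO]; rewrite inE => /andP[tK /forallP nt] st.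
case: (cofaces s t sS tK st) => [->|->|[s' s'S /andP[lt s't]]].
- by constructor 1.
- by constructor 2.
constructor 3; exists s'; last by rewrite lt.
rewrite inE s'S andbT; apply/negP => /imsetP[g _ e].
by move: (nt g); rewrite -e s't.
Qed.

Lemma avoid_del_orbit : avoid K S = avoid (del_orbit act K s0) (S :\: O).
Proof.
apply/setP => t; rewrite !inE; apply/andP/andP.
  move=> [tK /forall_inP noS].
  split; first by rewrite tK; apply/forallP => g; apply/noS/(matching_S_act M).
  by apply/forall_inP => s /setDP[sS _]; apply: noS.
move=> [/andP[tK /forallP noO] /forall_inP noS]; split=> //.
apply/forall_inP => s sS.
have [/imsetP[g _ ->] | sO] := boolP (s \in O); first exact: noO.
by apply: noS; rewrite inE sO.
Qed.

End TopOrbit.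

Lemma avoid0 (K : {set {set X}}) : avoid K set0 = K.
Proof.
by apply/setP => t; rewrite inE andb_idr // => _; apply/forall_inP => s; rewrite inE.
Qed.

Lemma matching_collapse K S :
  acyclic_G_matching K S -> G_collapses act K (avoid K S).
Proof.
elim: {S}#|S|.+1 {-2}S (ltnSn #|S|) K => // n IH S ltSn K M.
have [-> | [s1 s1S]] := set_0Vmem S; first by rewrite avoid0; apply: GC_refl.
have [s0 s0S s0_max] := arg_maxnP key s1S.
have {}s0S : s0 \in S := s0S.
have s0O : s0 \in simplex_orbit act s0 by apply/imsetP; exists 1; rewrite ?(sact1 act1).
rewrite (avoid_del_orbit M s0S).
apply: G_collapses_trans (GC_step (GC_refl act K) (elem_collapse_top M s0S s0_max)) _.
apply: IH (del_orbit_matching M s0S s0_max); apply: (@leq_trans #|S|) ltSn.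
rewrite proper_card // properEneq subsetDl andbT.
by apply/eqP => /setP/(_ s0); rewrite !inE s0O s0S.
Qed.

End MatchingCollapse.

Lemma order_complexP (Y : finType) (A : {set {set Y}}) (s : {set {set Y}}) :
  reflect [/\ s != set0, s \subset A &
              {in s &, forall a b : {set Y}, (a \subset b) || (b \subset a)}]
          (s \in order_complex A).
Proof.
rewrite inE; apply: (iffP idP) => [/andP[/andP[ne sA] /forall_inP cmp] | [ne sA cmp]].
  by split=> // a b aS bS; apply: (forall_inP (cmp a aS)).
by rewrite ne sA; apply/forall_inP => a aS; apply/forall_inP => b bS; apply: cmp.
Qed.

Lemma order_complex_sub (Y : finType) (A : {set {set Y}}) (s : {set {set Y}}) x :
  s \in order_complex A -> x \in s -> x \in A.
Proof. by case/order_complexP => _ /subsetP sA _; apply: sA. Qed.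

Lemma order_complex_subset (Y : finType) (A : {set {set Y}}) (s t : {set {set Y}}) :
  t \in order_complex A -> s \subset t -> s != set0 -> s \in order_complex A.
Proof.
case/order_complexP => _ tA cmp st ne; apply/order_complexP; split=> //.
  exact: subset_trans st tA.
by move=> a b /(subsetP st) aT /(subsetP st) bT; apply: cmp.
Qed.

Lemma order_complexS (Y : finType) (A B : {set {set Y}}) :
  A \subset B -> {subset order_complex A <= order_complex B}.
Proof.
move=> AB s /order_complexP[ne sA cmp]; apply/order_complexP.
by split=> //; apply: subset_trans AB.
Qed.

Lemma order_complex_act (Y : finType) (G : finGroupType) (act : Y -> G -> Y)
    (A : {set {set Y}}) :
  (forall x g, x \in A -> sact act x g \in A) ->
  forall s g, s \in order_complex A -> sact (sact act) s g \in order_complex A.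
Proof.
move=> A_act s g /order_complexP[ne sA cmp]; apply/order_complexP; split.
- by case/set0Pn: ne => x xs; apply/set0Pn; exists (sact act x g); apply: imset_f.
- by apply/subsetP => _ /imsetP[x xs ->]; apply/A_act/(subsetP sA).
move=> _ _ /imsetP[x xs ->] /imsetP[y ys ->].
by case/orP: (cmp x y xs ys) => /(sactS act g) ->; rewrite ?orbT.
Qed.

Section ClosureCollapse.
Local Open Scope group_scope.
Variables (Y : finType) (G : finGroupType) (act : Y -> G -> Y).
Hypothesis act1 : forall x, act x 1 = x.
Hypothesis actM : forall x g h, act (act x g) h = act x (h * g).
Variables (A : {set {set Y}}) (c : {set Y} -> {set Y}).
Hypothesis A_act : forall x g, x \in A -> sact act x g \in A.
Implicit Types (x y : {set Y}) (s t : {set {set Y}}).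
Hypothesis closure_in : {in A, forall x, c x \in A}.
Hypothesis closure_ext : {in A, forall x, x \subset c x}.
Hypothesis closure_idem : {in A, forall x, c (c x) \subset c x}.
Hypothesis closure_mono : {in A &, forall x y, x \subset y -> c x \subset c y}.
Hypothesis closure_act : {in A, forall x g, c (sact act x g) = sact act (c x) g}.

Local Notation closed := [set x in A | c x \subset x].
Local Notation chains := (order_complex A).

Lemma closure_closed x : x \in A -> c x \in closed.
Proof. by move=> xA; rewrite inE closure_in // closure_idem. Qed.

Lemma closure_min x y : x \in A -> y \in closed -> x \subset y -> c x \subset y.
Proof.
by move=> xA /setIdP[yA cy] xy; apply: subset_trans (closure_mono xA yA xy) cy.
Qed.

Lemma closed_act x g : x \in A -> (sact act x g \in closed) = (x \in closed).
Proof.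
by move=> xA; rewrite !inE A_act // xA closure_act // (sact_subset act1 actM).
Qed.

Definition is_top_open s x :=
  [&& x \in s, x \notin closed & [forall y in s, (y \notin closed) ==> (y \subset x)]].

Definition has_open s := [exists x in s, x \notin closed].

Definition top_open s := odflt set0 [pick x | is_top_open s x].

Lemma top_openP s : s \in chains -> has_open s -> is_top_open s (top_open s).
Proof.
case/order_complexP => _ _ cmp /exists_inP[x0 x0s x0o].
pose P x := (x \in s) && (x \notin closed).
have Px0 : P x0 by apply/andP.
have [x /andP[xs xo] x_max] := arg_maxnP (fun x : {set Y} => #|x|) Px0.
have top_x : is_top_open s x.
  rewrite /is_top_open xs xo; apply/forall_inP => y ys; apply/implyP => yo.
  case/orP: (cmp x y xs ys) => // xy.
  by have /eqP <- : x == y by rewrite eqEcard xy; apply: x_max; apply/andP.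
by rewrite /top_open; case: pickP => [y //|/(_ x)]; rewrite top_x.
Qed.

Lemma is_top_open_uniq s x y : is_top_open s x -> is_top_open s y -> x = y.
Proof.
case/and3P => xs xo /forall_inP x_top; case/and3P => ys yo /forall_inP y_top.
by apply/eqP; rewrite eqEsubset (implyP (y_top x xs)) // (implyP (x_top y ys)).
Qed.

Lemma top_open_in s : s \in chains -> has_open s -> top_open s \in A.
Proof.
by move=> sC so; case/and3P: (top_openP sC so) => xs _ _; apply: order_complex_sub xs.
Qed.

Lemma top_open_act s g : s \in chains -> has_open s ->
  has_open (sact (sact act) s g) /\
  top_open (sact (sact act) s g) = sact act (top_open s) g.
Proof.
move=> sC so; case/and3P: (top_openP sC so) => xs xo /forall_inP x_top.
have xgs : sact act (top_open s) g \in sact (sact act) s g by apply: imset_f.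
have xgo : sact act (top_open s) g \notin closed by rewrite closed_act ?top_open_in.
have sgo : has_open (sact (sact act) s g).
  by apply/exists_inP; exists (sact act (top_open s) g).
split=> //; apply: is_top_open_uniq (top_openP (order_complex_act A_act g sC) sgo) _.
rewrite /is_top_open xgs xgo; apply/forall_inP => _ /imsetP[y ys ->].
by rewrite closed_act ?(order_complex_sub sC ys) // (sact_subset act1 actM); apply: x_top.
Qed.

Lemma is_top_open_sub s t x :
  s \subset t -> x \in s -> is_top_open t x -> is_top_open s x.
Proof.
move=> st xs /and3P[_ xo /forall_inP x_top]; rewrite /is_top_open xs xo.
by apply/forall_inP => y /(subsetP st); apply: x_top.
Qed.

Lemma top_open_sub s t : s \in chains -> t \in chains -> has_open t ->
  s \subset t -> top_open t \in s -> has_open s /\ top_open s = top_open t.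
Proof.
move=> sC tC to st xs; have /and3P[_ xo _] := top_openP tC to.
have so : has_open s by apply/exists_inP; exists (top_open t).
split=> //; apply: is_top_open_uniq (top_openP sC so) _.
exact: is_top_open_sub st xs (top_openP tC to).
Qed.

Lemma top_open_subset_closure s y : s \in chains -> has_open s -> y \in s ->
  y \notin closed -> y \subset c (top_open s).
Proof.
move=> sC so ys yo; have /and3P[_ _ /forall_inP x_top] := top_openP sC so.
exact: subset_trans (implyP (x_top y ys) yo) (closure_ext (top_open_in sC so)).
Qed.

Lemma pivot_comparable s y : s \in chains -> has_open s -> y \in s ->
  (c (top_open s) \subset y) || (y \subset c (top_open s)).
Proof.
move=> sC so ys; have /and3P[xs _ _] := top_openP sC so.
have xA := top_open_in sC so.
have [yc|yo] := boolP (y \in closed); last by rewrite top_open_subset_closure ?orbT.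
case/order_complexP: sC => _ _ /(_ _ _ xs ys)/orP[xy|yx].
  by rewrite closure_min.
by rewrite (subset_trans yx (closure_ext xA)) orbT.
Qed.

Lemma pivot_setU_chain s : s \in chains -> has_open s ->
  c (top_open s) |: s \in chains.
Proof.
move=> sC so; have xA := top_open_in sC so.
case/order_complexP: (sC) => _ sA cmp; apply/order_complexP; split.
- by apply/set0Pn; exists (c (top_open s)); rewrite setU11.
- by rewrite subUset sub1set closure_in.
move=> a b /setU1P[-> | aS] /setU1P[-> | bS]; rewrite ?subxx //.
- exact: pivot_comparable.
- by rewrite orbC; apply: pivot_comparable.
- exact: cmp.
Qed.

Definition matched := [set s in chains | has_open s && (c (top_open s) \notin s)].

(* Lexicographic in (#|top_open s|, #|s|), as #|s| <= #|{: {set Y}}|. *)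
Definition chain_key s := #|top_open s| * #|{: {set Y}}|.+1 + #|s|.

Lemma chain_key_lt s t : #|top_open s| < #|top_open t| -> chain_key s < chain_key t.
Proof.
by move=> lt; have : #|s| <= #|{: {set Y}}| := max_card _; rewrite /chain_key; nia.
Qed.

Lemma matchedP s :
  reflect [/\ s \in chains, has_open s & c (top_open s) \notin s] (s \in matched).
Proof. by apply: (iffP setIdP) => [[? /andP[]] | [-> -> ->]]. Qed.

Lemma remove_pivot t : t \in chains -> has_open t ->
  t :\ c (top_open t) \in matched /\ top_open (t :\ c (top_open t)) = top_open t.
Proof.
move=> tC to; have /and3P[xt xo _] := top_openP tC to.
have xcx : top_open t != c (top_open t).
  by apply: contraNneq xo => ->; rewrite closure_closed ?top_open_in.
have xs : top_open t \in t :\ c (top_open t) by rewrite in_setD1 xcx.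
have sC : t :\ c (top_open t) \in chains.
  by apply: order_complex_subset tC (subD1set _ _) _; apply/set0Pn; exists (top_open t).
have [so e] := top_open_sub sC tC to (subD1set _ _) xs.
by split=> //; apply/matchedP; rewrite e setD11.
Qed.

Lemma avoid_matched : order_complex closed = avoid chains matched.
Proof.
apply/setP => t; apply/idP/setIdP => [tB | [tC /forall_inP no_s]].
  split; first by apply: order_complexS tB; apply/subsetP => x /setIdP[].
  apply/forall_inP => s /matchedP[_ /exists_inP[y ys yo] _].
  by apply: contra yo => /subsetP/(_ y ys); apply: order_complex_sub tB.
have [to | tc] := boolP (has_open t).
  by case: (remove_pivot tC to) => /no_s; rewrite subD1set.
case/order_complexP: tC => ne _ cmp; apply/order_complexP; split=> //.
apply/subsetP => y yt; apply: contraR tc => yo.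
by apply/exists_inP; exists y.
Qed.

Lemma matched_key_coface s s' : s \in matched -> s' \in matched ->
  s' \subset c (top_open s) |: s -> s' = s \/ chain_key s' < chain_key s.
Proof.
move=> /matchedP[sC so cs] /matchedP[s'C s'o cs'] s's.
have /and3P[xs _ _] := top_openP sC so.
have /and3P[x's' x'o _] := top_openP s'C s'o.
have x's : top_open s' \in s.
  move: (subsetP s's _ x's'); case/setU1P => // x'c.
  by move: x'o; rewrite x'c closure_closed ?top_open_in.
have x'x : top_open s' \subset top_open s.
  by case/and3P: (top_openP sC so) => _ _ /forall_inP/(_ _ x's)/implyP; apply.
have [ex | nx] := eqVneq (top_open s') (top_open s).
  have s'_sub : s' \subset s by rewrite -(setU1K cs) subsetD1 s's -ex.
  have [-> | ns] := eqVneq s' s; [by left | right].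
  by rewrite /chain_key ex ltn_add2l proper_card // properEneq ns.
by right; apply: chain_key_lt; rewrite proper_card // properEneq nx.
Qed.

Lemma matched_cofaces s t : s \in matched -> t \in chains -> s \subset t ->
  [\/ t = s, t = c (top_open s) |: s |
      exists2 s', s' \in matched & (chain_key s < chain_key s') && (s' \subset t)].
Proof.
move=> /matchedP[sC so cs] tC st.
have /and3P[xs xo _] := top_openP sC so.
have to : has_open t by apply/exists_inP; exists (top_open s); rewrite ?(subsetP st).
have /and3P[_ _ /forall_inP xt_top] := top_openP tC to.
have x_xt : top_open s \subset top_open t := implyP (xt_top _ (subsetP st _ xs)) xo.
have [rC e] := remove_pivot tC to.
have [lt | le] := ltnP (chain_key s) (chain_key (t :\ c (top_open t))).
  by constructor 3; exists (t :\ c (top_open t)); rewrite ?lt ?subD1set.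
have ex : top_open t = top_open s.
  apply/eqP; rewrite eq_sym eqEcard x_xt leqNgt; apply/negP => lt.
  by move: le; rewrite leqNgt chain_key_lt ?e.
rewrite ex in rC e le.
have s_sub : s \subset t :\ c (top_open s) by rewrite subsetD1 st.
have es : t :\ c (top_open s) = s.
  apply/eqP; rewrite eq_sym eqEcard s_sub.
  by move: le; rewrite /chain_key e leq_add2l.
have [ct | nct] := boolP (c (top_open s) \in t).
  by constructor 2; rewrite -{2}es setD1K.
by constructor 1; apply/eqP; rewrite eqEsubset st andbT -{1}es subsetD1 subxx nct.
Qed.

Lemma matched_acyclic : acyclic_G_matching (sact act) chain_key
  (fun s => c (top_open s)) chains matched.
Proof.
split.
- exact: order_complex_act.
- move=> s g /matchedP[sC so cs]; have [sgo e] := top_open_act g sC so.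
  apply/matchedP; rewrite order_complex_act // sgo e closure_act ?top_open_in //.
  by rewrite (mem_sact (sact1 act1) (sactM actM)).
- move=> s g /matchedP[sC so _]; have [_ e] := top_open_act g sC so.
  by rewrite /chain_key e (card_sact act1 actM) (card_sact (sact1 act1) (sactM actM)).
- by move=> s /matchedP[].
- by move=> s /matchedP[].
- by move=> s /matchedP[sC so _]; apply: pivot_setU_chain.
- exact: matched_key_coface.
exact: matched_cofaces.
Qed.

Theorem closure_collapse : G_collapses (sact act) chains (order_complex closed).
Proof.
rewrite avoid_matched; apply: matching_collapse matched_acyclic.
  exact: sact1.
exact: sactM.
Qed.

End ClosureCollapse.

Section BoxHull.
Local Open Scope group_scope.
Variables (V : finType) (r : nat) (E : {set {set V}}).
Local Notation tuple := (rtuple V r).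
Local Notation edge := (is_edge_tuple E).
Implicit Types (f : {ffun 'I_r -> {set V}}) (F : {set tuple}) (t u x : tuple).

Lemma tuple_act1 t : tuple_act t 1 = t.
Proof. by apply/ffunP => j; rewrite ffunE perm1. Qed.

Lemma tuple_actM t g h : tuple_act (tuple_act t g) h = tuple_act t (h * g).
Proof. by apply/ffunP => j; rewrite !ffunE permM. Qed.

Lemma edge_tuple_act t g : edge t -> edge (tuple_act t g).
Proof.
case/andP => /injectiveP t_inj tE; apply/andP; split.
  by apply/injectiveP => j k; rewrite !ffunE => /t_inj/perm_inj.
suff -> : [set tuple_act t g j | j in 'I_r] = [set t j | j in 'I_r] by [].
apply/setP => v; apply/imsetP/imsetP => [[j _ ->] | [j _ ->]].
  by exists (g j); rewrite ?ffunE.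
by exists (g^-1 j); rewrite ?ffunE ?permKV.
Qed.

Lemma proj_face_act j F g : proj j (face_act F g) = proj (g j) F.
Proof.
by rewrite /proj /face_act -imset_comp; apply: eq_imset => t /=; rewrite ffunE.
Qed.

(* i(pr_1 F, ..., pr_r F), the smallest product set containing [F]. *)
Definition box_hull F : {set tuple} := iP [ffun j => proj j F].

Lemma mem_box_hull F t : (t \in box_hull F) = [forall j, t j \in proj j F].
Proof. by rewrite inE; apply: eq_forallb => j; rewrite ffunE. Qed.

Lemma box_hull_ext F : F \subset box_hull F.
Proof.
by apply/subsetP => t tF; rewrite mem_box_hull; apply/forallP => j; apply: imset_f.
Qed.

Lemma proj_box_hull j F : proj j (box_hull F) \subset proj j F.
Proof.
by apply/subsetP => v /imsetP[t]; rewrite mem_box_hull => /forallP t_hull ->.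
Qed.

Lemma box_hull_idem F : box_hull (box_hull F) \subset box_hull F.
Proof.
apply/subsetP => t; rewrite !mem_box_hull => /forallP t_hull; apply/forallP => j.
exact: subsetP (proj_box_hull j F) _ (t_hull j).
Qed.

Lemma box_hull_mono F (F' : {set tuple}) : F \subset F' -> box_hull F \subset box_hull F'.
Proof.
move=> FF'; apply/subsetP => t; rewrite !mem_box_hull => /forallP t_hull.
by apply/forallP => j; apply: subsetP (imsetS _ FF') _ (t_hull j).
Qed.

Lemma box_hull_act F g :
  box_hull (face_act F g) = face_act (box_hull F) g.
Proof.
apply/setP => t; apply/idP/imsetP => [t_hull | [u u_hull ->]].
  exists (tuple_act t g^-1); last by rewrite tuple_actM mulgV tuple_act1.
  rewrite mem_box_hull; apply/forallP => k; rewrite ffunE.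
  move: t_hull; rewrite mem_box_hull => /forallP/(_ (g^-1 k)).
  by rewrite proj_face_act permKV.
rewrite mem_box_hull; apply/forallP => j; rewrite proj_face_act ffunE.
by move: u_hull; rewrite mem_box_hull => /forallP.
Qed.

Lemma Bedge_facesP F :
  reflect [/\ F != set0, forall j k, j != k -> [disjoint proj j F & proj k F] &
              {subset box_hull F <= edge}]
          (F \in Bedge_faces r E).
Proof.
rewrite inE; apply: (iffP and4P).
  move=> [ne _ /forallP disj /forallP hull].
  split=> // [j k jk | x]; first exact: implyP (forallP (disj j) k) jk.
  by rewrite mem_box_hull => /(implyP (hull x)).
move=> [ne disj hull]; split=> //.
- by apply/forall_inP => t tF; apply/hull/(subsetP (box_hull_ext F)).
- by apply/forallP => j; apply/forallP => k; apply/implyP; apply: disj.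
by apply/forallP => x; apply/implyP; rewrite -mem_box_hull; apply: hull.
Qed.

Lemma Bedge_face_act F g :
  F \in Bedge_faces r E -> face_act F g \in Bedge_faces r E.
Proof.
case/Bedge_facesP => ne disj hull; apply/Bedge_facesP; split.
- by case/set0Pn: ne => t tF; apply/set0Pn; exists (tuple_act t g); apply: imset_f.
- move=> j k jk; rewrite !proj_face_act; apply: disj.
  by apply: contra jk => /eqP/perm_inj ->.
move=> x; rewrite box_hull_act => /imsetP[u /hull u_edge ->].
exact: edge_tuple_act.
Qed.

Lemma box_hull_face F :
  F \in Bedge_faces r E -> box_hull F \in Bedge_faces r E.
Proof.
case/Bedge_facesP => ne disj hull; apply/Bedge_facesP; split.
- case/set0Pn: ne => t tF; apply/set0Pn; exists t.
  exact: subsetP (box_hull_ext F) _ tF.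
- move=> j k /disj /(disjointWl (proj_box_hull j F)).
  exact: disjointWr (proj_box_hull k F).
by move=> x /(subsetP (box_hull_idem F)); apply: hull.
Qed.

Lemma iPP f x : reflect (forall j, x j \in f j) (x \in iP f).
Proof. by rewrite inE; apply: forallP. Qed.

Lemma proj_iP j f : proj j (iP f) \subset f j.
Proof. by apply/subsetP => _ /imsetP[x /iPP x_f ->]. Qed.

Lemma box_hull_iP f : box_hull (iP f) \subset iP f.
Proof.
apply/subsetP => x; rewrite mem_box_hull => /forallP x_proj; apply/iPP => j.
exact: subsetP (proj_iP j f) _ (x_proj j).
Qed.

Lemma iP_face f : in_P E f -> iP f \in Bedge_faces r E.
Proof.
case/andP => /forallP ne /forallP edge_f.
have [t t_f] : exists t : tuple, forall j, t j \in f j.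
  have /fin_all_exists[u u_f] : forall j, exists v, v \in f j.
    by move=> j; apply/set0Pn.
  by exists [ffun j => u j] => j; rewrite ffunE.
apply/Bedge_facesP; split.
- by apply/set0Pn; exists t; apply/iPP.
- move=> j k jk; apply/pred0P => v /=; apply/negP.
  move=> /andP[/(subsetP (proj_iP j f)) vj /(subsetP (proj_iP k f)) vk].
  pose x : tuple := [ffun i => if (i == j) || (i == k) then v else t i].
  have /andP[/injectiveP x_inj _] : edge x.
    apply: (implyP (edge_f x)); apply/forallP => i; rewrite ffunE.
    by case: eqP => [-> | _] //=; case: eqP => [-> | _].
  suff /x_inj/eqP : x j = x k by rewrite (negbTE jk).
  by rewrite !ffunE !eqxx orbT.
by move=> x /(subsetP (box_hull_iP f)); rewrite inE => /(implyP (edge_f x)).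
Qed.

Lemma in_P_proj F :
  F \in Bedge_faces r E -> in_P E [ffun j => proj j F].
Proof.
case/Bedge_facesP => /set0Pn[t tF] _ hull; apply/andP; split.
  by apply/forallP => j; rewrite ffunE; apply/set0Pn; exists (t j); apply: imset_f.
by apply/forallP => x; apply/implyP => x_box; apply: hull; rewrite inE.
Qed.

Lemma iP_image : [set iP f | f in [set f | in_P E f]] =
                 [set F in Bedge_faces r E | box_hull F \subset F].
Proof.
apply/setP => F; apply/imsetP/setIdP => [[f] | [FA hullF]].
  by rewrite inE => fP ->; rewrite iP_face // box_hull_iP.
exists [ffun j => proj j F]; first by rewrite inE in_P_proj.
by apply/eqP; rewrite eqEsubset box_hull_ext; apply: hullF.
Qed.

End BoxHull.

Theorem mainTheorem5 (V : finType) (r : nat) (E : {set {set V}})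
  (HE : forall e, e \in E -> #|e| = r) :
  G_collapses (@face_act V r) (@sd_Bedge V r E) (@Delta_iP V r E).
Proof.
rewrite /Delta_iP iP_image.
apply: (closure_collapse (@tuple_act1 V r) (@tuple_actM V r) (@Bedge_face_act V r E)).
- exact: box_hull_face.
- by move=> F _; apply: box_hull_ext.
- by move=> F _; apply: box_hull_idem.
- by move=> F F' _ _; apply: box_hull_mono.
by move=> F _ g; apply: box_hull_act.
Qed.
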